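(* Let $G$ be an edge-coloured multigraph, $t \ge 5$, $M$ a rainbow matching of maximum size in $G$, $C_0$ the set of colours not used on $M$, and $N$ a $t$-auxiliary matching for $M$. If $v_e z$ is a $(C_0 \cup C_N)$-coloured edge with $e \in M_N$ and $z \notin V(N) \cup V(M\setminus M_N)$, then $z = m(x_e)$ or the edge $v_e z$ has colour $c(e)$.
   Context: A rainbow matching is a matching whose edges have pairwise distinct colours; an edge is $C$-coloured if its colour lies in $C$; $c(e)$ is the colour of edge $e$. Let $V$ be the vertex set of $G$. For a rainbow matching $M$ with unused colour set $C_0$, a $t$-auxiliary matching for $M$ is a matching $N$ each of whose edges has one endpoint in $V\setminus V(M)$ and the other in $V(M)$, such that for each edge of $N$ its pair of endpoints is joined by edges of at least $t$ distinct colours from $C_0$, and no two edges of $N$ intersect the same edge of $M$. $M_N \subseteq M$ is the set of edges of $M$ intersecting an edge of $N$; for $e \in M_N$, $x_e$ is the endpoint of $e$ lying in $V(N)$, $m(x_e)$ the other endpoint of $e$, and $v_e$ the vertex matched to $x_e$ in $N$. $C_N$ is the set of colours of the edges of $M_N$. *)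

From mathcomp Require Import all_boot.
Set Implicit Arguments. Unset Strict Implicit. Unset Printing Implicit Defensive.

Section Defs.
Variables (V E K : finType).
(* An edge-coloured multigraph: each edge g : E has endpoints src g, tgt g
   (loopless: src g != tgt g) and a colour col g : K.  Parallel edges allowed. *)
Variables (src tgt : E -> V) (col : E -> K).

Definition loopless := forall g : E, src g != tgt g.

Definition incident (v : V) (g : E) : bool := (src g == v) || (tgt g == v).

Definition joins (g : E) (u w : V) : bool :=
  ((src g == u) && (tgt g == w)) || ((src g == w) && (tgt g == u)).

Definition is_matching (M : {set E}) : Prop :=
  forall g h, g \in M -> h \in M -> g != h ->
    forall v, ~~ (incident v g && incident v h).

Definition rainbow (M : {set E}) : Prop := {in M &, injective col}.

Definition rainbow_matching (M : {set E}) : Prop := is_matching M /\ rainbow M.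

Definition max_rainbow_matching (M : {set E}) : Prop :=
  rainbow_matching M /\
  forall M' : {set E}, rainbow_matching M' -> #|M'| <= #|M|.

Definition VM (M : {set E}) : {set V} := [set v | [exists g in M, incident v g]].

Definition unused_colours (M : {set E}) : {set K} := ~: (col @: M).

Definition other_end (g : E) (v : V) : V := if src g == v then tgt g else src g.

(* An auxiliary matching N is a set of vertex pairs (v, x); by convention the
   first component v is the endpoint in V \ V(M), the second x the one in V(M). *)
Definition VN (N : {set V * V}) : {set V} :=
  [set u | [exists p in N, (u == p.1) || (u == p.2)]].

Definition aux_matching (t : nat) (M : {set E}) (N : {set V * V}) : Prop :=
  (forall p, p \in N -> p.1 != p.2) /\
  (forall p q, p \in N -> q \in N -> p != q ->
     [&& p.1 != q.1, p.1 != q.2, p.2 != q.1 & p.2 != q.2]) /\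
  (forall p, p \in N -> (p.1 \notin VM M) && (p.2 \in VM M)) /\
  (forall p, p \in N ->
     t <= #|[set col g | g in [set g : E | joins g p.1 p.2 &&
                                           (col g \in unused_colours M)]]|) /\
  (forall p q, p \in N -> q \in N -> p != q ->
     forall e, e \in M -> ~~ (incident p.2 e && incident q.2 e)).

Definition MN (M : {set E}) (N : {set V * V}) : {set E} :=
  [set e in M | [exists p in N, incident p.2 e]].

Definition CN (M : {set E}) (N : {set V * V}) : {set K} := col @: MN M N.

End Defs.

From Pilot Require Import Defs.
From mathcomp Require Import all_boot.
Set Implicit Arguments. Unset Strict Implicit. Unset Printing Implicit Defensive.

(* Suppose z <> m(x_e) and c(v_e z) <> c(e).  Let R consist of the edge of M
   at z and the edge of M coloured c(v_e z), if any.  Both lie in M_N \ {e},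
   so |R| <= 2 < t.  Each f in R can be traded for an edge on the auxiliary
   pair of f with a colour of C_0 avoiding c(v_e z) and the colours already
   spent: the auxiliary pairs are vertex-disjoint from one another and from
   M \ R, and fewer than t colours are ever forbidden.  The resulting rainbow
   matching has |M| edges, misses v_e, z and the colour of v_e z, so adding
   v_e z contradicts the maximality of M. *)

Section RainbowMatchings.
Variables (V E K : finType) (src tgt : E -> V) (col : E -> K).
Implicit Types (S T : {set E}) (f g h : E) (u v w : V).
Local Notation incident := (incident src tgt).
Local Notation joins := (joins src tgt).
Local Notation VM := (VM src tgt).
Local Notation rainbow_matching := (rainbow_matching src tgt col).

Lemma incident_joins g u w v : joins g u w -> incident v g = (v == u) || (v == w).
Proof.
rewrite /joins /Defs.incident => /orP [] /andP [/eqP -> /eqP ->].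
  by rewrite !(eq_sym v).
by rewrite orbC !(eq_sym v).
Qed.

Lemma VMP S v : reflect (exists2 f, f \in S & incident v f) (v \in VM S).
Proof.
rewrite inE; apply: (iffP existsP) => [[f /andP [fS vf]]|[f fS vf]]; exists f => //.
by rewrite fS.
Qed.

Lemma VMS S T : S \subset T -> VM S \subset VM T.
Proof.
move=> /subsetP ST; apply/subsetP => v /VMP [f /ST fT vf]; apply/VMP; by exists f.
Qed.

Lemma matching_incident_eq S v f1 f2 : is_matching src tgt S ->
  f1 \in S -> f2 \in S -> incident v f1 -> incident v f2 -> f1 = f2.
Proof.
move=> mS f1S f2S v1 v2; apply/eqP; apply: contraT => f12.
by have := mS _ _ f1S f2S f12 v; rewrite v1 v2.
Qed.

Lemma card_edges_at_le1 S v :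
  is_matching src tgt S -> #|[set f in S | incident v f]| <= 1.
Proof.
move=> mS; apply/card_le1_eqP => f1 f2; rewrite !inE => /andP [f1S v1] /andP [f2S v2].
exact: matching_incident_eq mS f2S f1S v2 v1.
Qed.

Lemma card_edges_coloured_le1 S c :
  rainbow col S -> #|[set f in S | col f == c]| <= 1.
Proof.
move=> rS; apply/card_le1_eqP => f1 f2; rewrite !inE => /andP [f1S /eqP c1] /andP [f2S /eqP c2].
by apply: rS; rewrite ?c1 ?c2.
Qed.

Lemma other_endP e v w :
  incident v e -> incident w e -> v != w -> v = other_end src tgt e w.
Proof.
rewrite /Defs.incident /other_end => ve we vw.
case: ifP => [/eqP sw|/negbT sw].
  by move: ve; rewrite sw [w == v]eq_sym (negbTE vw) orFb => /eqP.
move: we; rewrite (negbTE sw) orFb => /eqP tw.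
by move: ve; rewrite tw [w == v]eq_sym (negbTE vw) orbF => /eqP.
Qed.

Lemma rainbow_matchingS S T : S \subset T -> rainbow_matching T -> rainbow_matching S.
Proof.
move=> /subsetP ST [mT rT].
by split=> [f h /ST fT /ST hT|f h /ST fT /ST hT]; [apply: mT|apply: rT].
Qed.

Lemma rainbow_matching_setU1 S h u w :
  rainbow_matching S -> joins h u w ->
  {in S, forall f, ~~ incident u f && ~~ incident w f} -> col h \notin col @: S ->
  rainbow_matching (h |: S) /\ #|h |: S| = #|S|.+1.
Proof.
move=> [mS rS] huw uwS hcol.
have hS : h \notin S by apply: contra hcol => hS; apply: imset_f.
split; last by rewrite cardsU1 hS.
have hf v f : f \in S -> ~~ (incident v h && incident v f).
  move=> /uwS /andP [uf wf]; rewrite (incident_joins v huw).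
  by apply/negP => /andP [/orP [/eqP ->|/eqP ->]]; apply/negP.
split=> [f1 f2|f1 f2]; rewrite !in_setU1 => /predU1P [->|f1S] /predU1P [->|f2S].
- by rewrite eqxx.
- by move=> _ v; apply: hf.
- by move=> _ v; rewrite andbC; apply: hf.
- exact: mS.
- by [].
- by move=> c12; move: hcol; rewrite c12 imset_f.
- by move=> c12; move: hcol; rewrite -c12 imset_f.
- exact: rS.
Qed.

End RainbowMatchings.

Section Rerouting.
Variables (V E K : finType) (src tgt : E -> V) (col : E -> K).
Variables (t : nat) (M : {set E}) (N : {set V * V}).
Hypotheses (RM : rainbow_matching src tgt col M) (AN : aux_matching src tgt col t M N).
Implicit Types (R S X Y : {set E}) (f g h x : E) (c : K) (p q r : V * V) (v w z : V).
Local Notation incident := (incident src tgt).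
Local Notation joins := (joins src tgt).
Local Notation VM := (VM src tgt).
Local Notation MN := (MN src tgt M N).
Local Notation C0 := (unused_colours col M).
Local Notation rainbow_matching := (rainbow_matching src tgt col).

Lemma outer_notin_VM q : q \in N -> q.1 \notin VM M.
Proof. by case: AN => _ [_ [outer _]] /outer /andP []. Qed.

Lemma outer_not_incident q x : q \in N -> x \in M -> ~~ incident q.1 x.
Proof. by move=> /outer_notin_VM qM xM; apply: contra qM => qx; apply/VMP; exists x. Qed.

Lemma MN_partner f : f \in MN -> f \in M /\ exists2 q, q \in N & incident q.2 f.
Proof. by rewrite inE => /andP [fM /existsP [q /andP [qN qf]]]; split => //; exists q. Qed.

Lemma partners_disjoint q r f1 f2 h : q \in N -> r \in N -> f1 \in M -> f2 \in M ->
  f1 != f2 -> incident q.2 f1 -> incident r.2 f2 -> joins h r.1 r.2 ->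
  ~~ incident q.1 h && ~~ incident q.2 h.
Proof.
move=> qN rN f1M f2M f12 qf1 rf2 hr; rewrite !(incident_joins _ hr) !negb_or.
have qr : q != r.
  apply: contraNneq f12 => qr; rewrite -qr in rf2; apply/eqP.
  exact: matching_incident_eq RM.1 f1M f2M qf1 rf2.
by case: AN => _ [disj _]; have /and4P [-> -> -> ->] := disj q r qN rN qr.
Qed.

Lemma partner_not_incident q f x : q \in N -> f \in M -> x \in M -> x != f ->
  incident q.2 f -> ~~ incident q.1 x && ~~ incident q.2 x.
Proof.
move=> qN fM xM xf qf; rewrite outer_not_incident //=.
by apply: contraNN xf => qx; apply/eqP; apply: matching_incident_eq RM.1 xM fM qx qf.
Qed.

Lemma aux_edge q (F : {set K}) : q \in N -> #|F| < t ->
  exists h, [/\ joins h q.1 q.2, col h \in C0 & col h \notin F].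
Proof.
case: AN => _ [_ [_ [many _]]] /many tq Ft.
have : ~~ ([set col g | g in [set g | joins g q.1 q.2 && (col g \in C0)]] \subset F).
  by apply: contraTN Ft => /subset_leq_card; rewrite -leqNgt; apply: leq_trans.
case/subsetPn => _ /imsetP [h + ->] hF; rewrite inE => /andP [hq hC0].
by exists h.
Qed.

Definition rerouting_edge R c h : bool :=
  [exists q in N, joins h q.1 q.2 && (q.2 \in VM R)] && (col h \in C0 :\ c).

(* [X] arises from [M] by trading the edges of [R] for edges on their auxiliary
   pairs; [#|X :\: M|] bounds the number of colours of C_0 already spent. *)
Definition reroutes R c X : Prop :=
  [/\ rainbow_matching X, #|X| = #|M|, M :\: R \subset X, #|X :\: M| <= #|R|
    & {in X :\: (M :\: R), forall h, rerouting_edge R c h}].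

Lemma rerouting_edgeS R S c h :
  R \subset S -> rerouting_edge R c h -> rerouting_edge S c h.
Proof.
move=> RS /andP [/existsP [q /and3P [qN hq qR]] hc]; rewrite /rerouting_edge hc andbT.
by apply/existsP; exists q; rewrite qN hq (subsetP (VMS src tgt RS)).
Qed.

Lemma reroutes0 c : reroutes set0 c M.
Proof.
split; rewrite ?setD0 ?setDv ?cards0 //.
by move=> h; rewrite inE.
Qed.

Lemma reroutes_new_edge R c X x : R \subset M -> reroutes R c X ->
  x \in X -> x \notin M :\: R ->
  exists q f, [/\ q \in N, f \in R, incident q.2 f, joins x q.1 q.2 & col x \in C0 :\ c].
Proof.
move=> RsubM [_ _ _ _ new] xX xMR.
have /andP [/existsP [q /and3P [qN xq /VMP [f fR qf]]] xc] : rerouting_edge R c x.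
  by apply: new; rewrite in_setD xMR.
by exists q, f.
Qed.

Lemma reroutes_avoid_partner R c X q f x : R \subset M -> reroutes R c X ->
  q \in N -> f \in M -> f \notin R -> incident q.2 f -> x \in X -> x != f ->
  ~~ incident q.1 x && ~~ incident q.2 x.
Proof.
move=> RsubM XR qN fM fR qf xX xf.
case: (boolP (x \in M :\: R)) => [/setDP [xM _]|xMR].
  exact: partner_not_incident qN fM xM xf qf.
have [r [f' [rN f'R rf' xr _]]] := reroutes_new_edge RsubM XR xX xMR.
have ff' : f != f' by apply: contraNneq fR => ->.
exact: partners_disjoint qN rN fM (subsetP RsubM _ f'R) ff' qf rf' xr.
Qed.

Lemma reroutes_setU1 R c X f : R \subset M -> reroutes R c X ->
  f \in MN -> f \notin R -> #|f |: R| < t -> exists Y, reroutes (f |: R) c Y.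
Proof.
move=> RsubM XR fMN fR fRt; have [RX cardX MRX XMR new] := XR.
have [fM [q qN qf]] := MN_partner fMN.
have fX : f \in X by apply: (subsetP MRX); rewrite in_setD fR.
have [|h [hq hC0 hF]] := aux_edge (F := c |: col @: (X :\: M)) qN.
  apply: leq_ltn_trans fRt; rewrite cardsU1 (cardsU1 f) fR.
  exact: leq_add (leq_b1 _) (leq_trans (leq_imset_card _ _) XMR).
have hX : col h \notin col @: X.
  apply/imsetP => -[x xX hx]; case: (boolP (x \in M)) => xM.
    by move: hC0; rewrite inE hx imset_f.
  by move: hF; rewrite !inE hx imset_f ?orbT // in_setD xM.
have qXf : {in X :\ f, forall x, ~~ incident q.1 x && ~~ incident q.2 x}.
  by move=> x /setD1P [xf xX]; apply: reroutes_avoid_partner XR qN fM fR qf xX xf.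
have [RY cardY] := rainbow_matching_setU1 (rainbow_matchingS (subsetDl X [set f]) RX)
  hq qXf (contra (subsetP (imsetS col (subsetDl X [set f])) _) hX).
exists (h |: (X :\ f)); split => //.
- by rewrite cardY -cardX (cardsD1 f X) fX.
- apply/subsetP => x; rewrite !inE negb_or => /andP [/andP [xf xR] xM].
  by rewrite xf (subsetP MRX) ?orbT // in_setD xR.
- rewrite cardsU1 fR add1n.
  apply: leq_trans (subset_leq_card (_ : _ \subset h |: (X :\: M))) _.
    by apply/subsetP => x; rewrite !inE => /andP [xM /orP [->|/andP [_ ->]]]; rewrite ?xM ?orbT.
  by rewrite cardsU1; apply: leq_add (leq_b1 _) XMR.
- move=> x; rewrite in_setD in_setU1 => /andP [xMR /predU1P [->|/setD1P [xf xX]]].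
    rewrite /rerouting_edge in_setD1 hC0 andbT; apply/andP; split.
      by apply/existsP; exists q; rewrite qN hq; apply/VMP; exists f; rewrite ?setU11.
    by apply: contraNneq hF => ->; rewrite setU11.
  apply: rerouting_edgeS (subsetUr _ _) (new x _).
  by rewrite in_setD xX andbT; apply: contra xMR; rewrite !inE negb_or xf => /andP [-> ->].
Qed.

Lemma reroute R c : R \subset MN -> #|R| < t -> exists X, reroutes R c X.
Proof.
move: {2}#|R| (erefl #|R|) => n; elim: n R => [|n IH] R cardR RMN Rt.
  by exists M; move/eqP: cardR; rewrite cards_eq0 => /eqP ->; apply: reroutes0.
have [f fR] : exists f, f \in R by apply/set0Pn; rewrite -card_gt0 cardR.
have RsubM : R \subset M by apply/subsetP => x /(subsetP RMN) /MN_partner [].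
have [|||X XR] := IH (R :\ f).
- by move: cardR; rewrite (cardsD1 f R) fR add1n => -[].
- exact: subset_trans (subsetDl _ _) RMN.
- exact: leq_ltn_trans (subset_leq_card (subsetDl _ _)) Rt.
rewrite -(setD1K fR); apply: reroutes_setU1 XR _ _ _.
- exact: subset_trans (subsetDl _ _) RsubM.
- exact: (subsetP RMN).
- by rewrite setD11.
- by rewrite setD1K.
Qed.

Lemma in_VN q v : q \in N -> (v == q.1) || (v == q.2) -> v \in VN N.
Proof. by move=> qN vq; rewrite inE; apply/existsP; exists q; rewrite qN. Qed.

Lemma reroutes_avoid R c X w x : R \subset M -> reroutes R c X ->
  w \notin VM (M :\: R) -> w \notin VN N -> x \in X -> ~~ incident w x.
Proof.
move=> RsubM XR wMR wN xX; case: (boolP (x \in M :\: R)) => xMR.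
  by apply: contra wMR => wx; apply/VMP; exists x.
have [q [f [qN _ _ xq _]]] := reroutes_new_edge RsubM XR xX xMR.
by rewrite (incident_joins _ xq); apply: contra wN; apply: in_VN.
Qed.

Lemma reroutes_avoid_outer R c X p f x : R \subset M -> reroutes R c X ->
  p \in N -> f \in M -> f \notin R -> incident p.2 f -> x \in X -> ~~ incident p.1 x.
Proof.
move=> RsubM XR pN fM fR pf xX; have [-> | xf] := eqVneq x f.
  exact: outer_not_incident.
by case/andP: (reroutes_avoid_partner RsubM XR pN fM fR pf xX xf).
Qed.

Lemma reroutes_col R c X : R \subset M -> reroutes R c X ->
  c \notin col @: (M :\: R) -> c \notin col @: X.
Proof.
move=> RsubM XR cMR; apply/imsetP => -[x xX cx].
case: (boolP (x \in M :\: R)) => xMR; first by move: cMR; rewrite cx imset_f.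
have [q [f [_ _ _ _]]] := reroutes_new_edge RsubM XR xX xMR.
by rewrite -cx !inE eqxx.
Qed.

Lemma edges_at_sub_MN z : z \notin VM (M :\: MN) -> [set f in M | incident z f] \subset MN.
Proof.
move=> zMN; apply/subsetP => f; rewrite inE => /andP [fM zf].
by apply: contraR zMN => fMN; apply/VMP; exists f; rewrite // in_setD fMN.
Qed.

Lemma edges_coloured_sub_MN c : c \in C0 :|: col @: MN -> [set f in M | col f == c] \subset MN.
Proof.
move=> cC; apply/subsetP => f; rewrite inE => /andP [fM /eqP fc].
move: cC; rewrite in_setU inE -fc imset_f //= => /imsetP [f' f'MN ff'].
by have [f'M _] := MN_partner f'MN; rewrite (RM.2 _ _ fM f'M ff').
Qed.

End Rerouting.

Theorem lemma2p7 (V E K : finType) (src tgt : E -> V) (col : E -> K)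
  (t : nat) (M : {set E}) (N : {set V * V}) :
  loopless src tgt ->
  5 <= t ->
  max_rainbow_matching src tgt col M ->
  aux_matching src tgt col t M N ->
  forall (e : E) (p : V * V) (g : E) (z : V),
    e \in MN src tgt M N ->
    p \in N -> incident src tgt p.2 e ->
    (* p = (v_e, x_e) *)
    joins src tgt g p.1 z ->
    col g \in unused_colours col M :|: CN src tgt col M N ->
    z \notin VN N :|: VM src tgt (M :\: MN src tgt M N) ->
    z = other_end src tgt e p.2 \/ col g = col e.
Proof.
move=> _ t5 [RM maxM] AN e p g z eMN pN pe gpz gC.
rewrite in_setU negb_or => /andP [zN zMN].
case: (eqVneq z (other_end src tgt e p.2)) => [->|zm]; [by left | right].
apply/eqP; apply: contraT => ge.
set R := [set f in M | incident src tgt z f] :|: [set f in M | col f == col g].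
have RMN : R \subset MN src tgt M N.
  by rewrite subUset edges_at_sub_MN ?edges_coloured_sub_MN.
have RsubM : R \subset M by apply/subsetP => f; rewrite !inE -andb_orr => /andP [].
have [eM _] := MN_partner eMN.
have eR : e \notin R.
  rewrite !inE eM /= negb_or eq_sym ge andbT; apply: contra zm => ze.
  apply/eqP/other_endP => //; apply: contraNneq zN => ->.
  by apply: in_VN pN _; rewrite eqxx orbT.
have Rt : #|R| < t.
  rewrite cardsU; apply: leq_ltn_trans (leq_subr _ _) _.
  apply: leq_ltn_trans (leq_add (card_edges_at_le1 _ RM.1) (card_edges_coloured_le1 _ RM.2)) _.
  exact: leq_trans t5.
have [X XR] := reroute RM AN (col g) RMN Rt.
have [RX cardX _ _ _] := XR.
have [||RX' cardX'] := rainbow_matching_setU1 RX gpz.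
- move=> x xX; rewrite (reroutes_avoid_outer RM AN RsubM XR pN eM eR pe xX).
  rewrite (reroutes_avoid RsubM XR _ zN xX) //.
  by apply/VMP => -[f /setDP [fM]]; rewrite !inE fM => /negP + zf; rewrite zf.
- apply: reroutes_col RsubM XR _.
  by apply/imsetP => -[f /setDP [fM]]; rewrite !inE fM => /negP + gf; rewrite -gf eqxx orbT.
by have := maxM _ RX'; rewrite cardX' cardX ltnn.
Qed.
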